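(* Let $G$ be a finite group, $H$ a subgroup of $G$, and $c \in G$ with $c \notin N(H)$, where $N(H) = \{g \in G : gHg^{-1} = H\}$ is the normalizer of $H$. Then \[ |H \cap cHc| \le \frac{|H|}{2}, \] where $cHc = \{chc : h \in H\}$. *)

From mathcomp Require Import all_boot all_fingroup.
Set Implicit Arguments. Unset Strict Implicit. Unset Printing Implicit Defensive.
Local Open Scope group_scope.

Definition twosided (gT : finGroupType) (c : gT) (H : {set gT}) : {set gT} :=
  [set c * h * c | h in H].

From mathcomp Require Import all_boot all_fingroup.
Set Implicit Arguments.
Unset Strict Implicit.
Unset Printing Implicit Defensive.
Local Open Scope group_scope.

(* If c h0 c lies in H, right multiplication by (c h0 c)^-1 maps H :&: cHc
   injectively into the subgroup H :&: H^(c^-1), since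
   c h c (c h0 c)^-1 = (h h0^-1)^(c^-1); and K := H :&: H^(c^-1) is a proper
   subgroup of H when c does not normalize H, so Lagrange gives 2 |K| <= |H|. *)

Lemma twosided_conjgV (gT : finGroupType) (c h h0 : gT) :
  c * h * c * (c * h0 * c)^-1 = (h * h0^-1) ^ c^-1.
Proof. by rewrite /conjg invgK !invMg !mulgA mulgK. Qed.

Lemma card_setI_twosided_le (gT : finGroupType) (H : {group gT}) (c : gT) :
  (#|H :&: twosided c H| <= #|H :&: H :^ c^-1|)%N.
Proof.
have [-> | [x]] := set_0Vmem (H :&: twosided c H); first by rewrite cards0.
rewrite inE => /andP[xH /imsetP[h0 h0H xE]]; rewrite xE in xH.
rewrite -(card_in_imset (f := fun y => y * (c * h0 * c)^-1)); last first.
  by move=> y z _ _ /mulIg.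
apply/subset_leq_card/subsetP => _ /imsetP[y + ->].
rewrite inE => /andP[yH /imsetP[h hH yE]]; rewrite yE in yH *.
by rewrite inE groupM ?groupV // twosided_conjgV memJ_conjg groupM ?groupV.
Qed.

Lemma sub_conjgV_norm (gT : finGroupType) (H : {group gT}) (c : gT) :
  H \subset H :^ c^-1 -> c \in 'N(H).
Proof.
move=> sHHc; rewrite -groupV; apply/normP/esym/eqP.
by rewrite eqEcard sHHc cardJg leqnn.
Qed.

Lemma double_card_proper_sub (gT : finGroupType) (K H : {group gT}) :
  K \subset H -> ~~ (H \subset K) -> (2 * #|K| <= #|H|)%N.
Proof.
move=> sKH; rewrite -indexg_gt1 -(Lagrange sKH) => idx_gt1.
by rewrite mulnC leq_mul2l idx_gt1 orbT.
Qed.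

Theorem lemma2 (gT : finGroupType) (G H : {group gT}) (c : gT) :
  H \subset G -> c \in G -> c \notin 'N_G(H) ->
  (2 * #|H :&: twosided c H| <= #|H|)%N.
Proof.
move=> _ cG ncN.
have ncH : c \notin 'N(H) by apply: contra ncN => cN; rewrite inE cG cN.
have HnsubK : ~~ (H \subset (H :&: H :^ c^-1)%G).
  by apply: contra ncH; rewrite subsetI subxx => /sub_conjgV_norm.
apply: leq_trans _ (double_card_proper_sub (subsetIl _ _) HnsubK).
by rewrite leq_mul2l card_setI_twosided_le orbT.
Qed.
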